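(* Let $M\in GL(2n,\mathbb{R})$ and assume that $M^{T}GM\in\operatorname{Sp}(n)$ for every matrix of the form $$G=\begin{pmatrix} X & 0\\ 0 & X^{-1}\end{pmatrix},$$ where $X$ ranges over all real symmetric positive definite $n\times n$ matrices. Then $M$ is either symplectic or antisymplectic.
   Context: $J=\begin{pmatrix}0&I\\-I&0\end{pmatrix}$ with $I$ the $n\times n$ identity. The symplectic group is $\operatorname{Sp}(n)=\{S\in GL(2n,\mathbb{R}): S^TJS=J\}$. A matrix $M\in GL(2n,\mathbb{R})$ is antisymplectic if $M^TJM=-J$, equivalently $CM\in\operatorname{Sp}(n)$ where $C=\begin{pmatrix}I&0\\0&-I\end{pmatrix}$. *)

From HB Require Import structures.
From mathcomp Require Import all_boot all_order all_algebra.
Set Implicit Arguments. Unset Strict Implicit. Unset Printing Implicit Defensive.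
Import Order.TTheory GRing.Theory Num.Theory.
Local Open Scope ring_scope.

Definition Jmx (R : pzRingType) (n : nat) : 'M[R]_(n + n) :=
  block_mx 0 1%:M (- 1%:M) 0.

Definition symplectic (R : pzRingType) (n : nat) (S : 'M[R]_(n + n)) : Prop :=
  S^T *m Jmx R n *m S = Jmx R n.

Definition antisymplectic (R : pzRingType) (n : nat) (M : 'M[R]_(n + n)) : Prop :=
  M^T *m Jmx R n *m M = - Jmx R n.

Definition sym_posdef (R : numDomainType) (n : nat) (X : 'M[R]_n) : Prop :=
  X^T = X /\ forall v : 'rV[R]_n, v != 0 -> 0 < (v *m X *m v^T) 0 0.

From HB Require Import structures.
From mathcomp Require Import all_boot all_order all_algebra.
From mathcomp Require Import ring lra.
Set Implicit Arguments. Unset Strict Implicit. Unset Printing Implicit Defensive.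
Import Order.TTheory GRing.Theory Num.Theory.
Local Open Scope ring_scope.

(* Write G_X = diag(X, X^-1) and K = M J M^T.  Since G_X is
   symmetric, the hypothesis reads M^T (G_X K G_X) M = J for every symmetric
   positive definite X; taking X = 1 gives M^T K M = J, and cancelling the
   invertible factors M^T, M yields G_X K G_X = K for every such X.
   Write K = [[A, B], [C, D]].  Invariance under X = 2 forces A = D = 0,
   invariance under X = 1 + u^T u forces B to commute with every u^T u and
   hence to be scalar, and skew-symmetry of K then gives K = b J.
   A matrix with M J M^T = b J also satisfies M^T J M = b J (conformal
   symplecticity is stable under transposition), so J = M^T K M = b^2 J,
   i.e. b = 1 or b = -1: M is symplectic or antisymplectic. *)

Lemma mul_col_row_entry (R : pzSemiRingType) (m : nat)
    (c : 'M[R]_(m, 1)) (r : 'M[R]_(1, m)) i j :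
  (c *m r) i j = c i 0 * r 0 j.
Proof. by rewrite mxE big_ord1. Qed.

Section StandardSymplecticForm.
Variable R : pzRingType.
Variable n : nat.

Local Notation J := (Jmx R n).

Lemma Jmx_sqr : J *m J = - 1%:M.
Proof.
rewrite /Jmx mulmx_block (scalar_mx_block n n) opp_block_mx.
by rewrite !mul0mx !mulmx0 !add0r !addr0 mul1mx mulmx1 oppr0.
Qed.

Lemma tr_Jmx : J^T = - J.
Proof.
by rewrite /Jmx tr_block_mx !trmx0 linearN /= trmx1 opp_block_mx !oppr0 opprK.
Qed.

Lemma diag_congr_block (X Y A B C D : 'M[R]_n) :
  block_mx X 0 0 Y *m block_mx A B C D *m block_mx X 0 0 Y =
  block_mx (X *m A *m X) (X *m B *m Y) (Y *m C *m X) (Y *m D *m Y).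
Proof. by rewrite !mulmx_block !mul0mx !mulmx0 !addr0 !add0r. Qed.

End StandardSymplecticForm.

Lemma Jmx_neq0 (R : nzRingType) (n : nat) : Jmx R n.+1 != 0.
Proof.
apply/negP => /eqP /matrixP /(_ (lshift n.+1 0) (rshift n.+1 0)).
by rewrite /Jmx block_mxEur !mxE /= mulr1n => /eqP; rewrite oner_eq0.
Qed.

Lemma conformal_symplectic_tr (R : comUnitRingType) (n : nat)
    (M : 'M[R]_(n + n)) (b : R) :
  M \in unitmx -> M *m Jmx R n *m M^T = b *: Jmx R n ->
  M^T *m Jmx R n *m M = b *: Jmx R n.
Proof.
set J := Jmx R n => hM hK.
have JMt : J *m M^T = b *: (invmx M *m J).
  by rewrite -[J *m M^T](mulKmx hM) (mulmxA M J) hK -scalemxAr.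
have Mt : M^T = - b *: (J *m invmx M *m J).
  rewrite -[M^T]mul1mx -[1%:M]opprK -(Jmx_sqr R n) mulNmx -mulmxA JMt.
  by rewrite scalemxAr scaleNr !mulmxA scalemxAr.
have -> : M^T *m J *m M = - b *: (J *m invmx M *m (J *m J) *m M).
  by rewrite Mt -!scalemxAl !mulmxA.
by rewrite Jmx_sqr mulmxN mulmx1 mulNmx mulmxKV // scaleNr scalerN opprK.
Qed.

Section PositiveDefinite.
Variable R : realFieldType.

Lemma sqr_norm_gt0 (n : nat) (v : 'rV[R]_n) : v != 0 -> 0 < (v *m v^T) 0 0.
Proof.
have sq_ge0 k : 0 <= v 0 k * v^T k 0 by rewrite mxE -expr2 sqr_ge0.
move=> v_neq0; rewrite mxE lt_def sumr_ge0 ?andbT //.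
apply/negP => /eqP sum_eq0; move/negP: v_neq0; apply.
apply/eqP/matrixP => i j; rewrite (ord1 i) mxE.
have := @psumr_eq0P R _ xpredT (fun k => v 0 k * v^T k 0) (fun k _ => sq_ge0 k).
move=> /(_ sum_eq0 j isT); rewrite mxE => vj2_eq0.
by apply/eqP; rewrite -[_ == _]orbb -mulf_eq0 vj2_eq0.
Qed.

(* Positive definite matrices have trivial kernel, hence are invertible. *)
Lemma sym_posdef_unit (n : nat) (X : 'M[R]_n) : sym_posdef X -> X \in unitmx.
Proof.
case=> _ X_pos; rewrite -row_free_unit -kermx_eq0; apply/eqP/row_matrixP => i.
rewrite row0; apply/eqP; apply/negPn/negP => /X_pos.
have -> : row i (kermx X) *m X = 0 by apply/sub_kermxP; exact: row_sub.
by rewrite mul0mx mxE ltxx.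
Qed.

Lemma sym_posdef_scalar (n : nat) (c : R) : 0 < c -> sym_posdef (c%:M : 'M_n).
Proof.
move=> c_gt0; split; first by rewrite tr_scalar_mx.
move=> v /sqr_norm_gt0 vv_gt0.
by rewrite mul_mx_scalar -scalemxAl mxE mulr_gt0.
Qed.

Lemma sym_posdef_rank1 (n : nat) (u : 'rV[R]_n) : sym_posdef (1%:M + u^T *m u).
Proof.
split; first by rewrite linearD /= trmx1 trmx_mul trmxK.
move=> v /sqr_norm_gt0 vv_gt0; rewrite mulmxDr mulmx1 mulmxDl mxE.
have : 0 <= (v *m (u^T *m u) *m v^T) 0 0.
  have -> : v *m (u^T *m u) *m v^T = (v *m u^T) *m (v *m u^T)^T.
    by rewrite trmx_mul trmxK !mulmxA.
  by rewrite mul_col_row_entry [_^T 0 0]mxE -expr2 sqr_ge0.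
lra.
Qed.

End PositiveDefinite.

Section InvariantMatrices.
Variable R : realFieldType.

(* A matrix commuting with every rank-one matrix u^T u is scalar: the basis
   vectors u = e_i kill the off-diagonal entries, u = e_i + e_j equates the
   diagonal ones. *)
Lemma commute_rank1_scalar (n : nat) (B : 'M[R]_n.+1) :
  (forall u : 'rV_n.+1, u^T *m u *m B = B *m (u^T *m u)) -> B = (B 0 0)%:M.
Proof.
move=> commB.
have commB' (u : 'rV_n.+1) : u^T *m (u *m B) = B *m u^T *m u.
  by rewrite mulmxA commB mulmxA.
have offdiag i j : j != i -> B i j = 0.
  move=> ji; have /matrixP /(_ i j) := commB' (delta_mx 0 i).
  rewrite -rowE trmx_delta -colE !mul_col_row_entry !mxE /=.
  by rewrite !eqxx (negbTE ji) mul1r mulr0.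
have diag i j : i != j -> B i i = B j j.
  move=> ij; have /matrixP /(_ i j) := commB' (delta_mx 0 i + delta_mx 0 j).
  rewrite [(_ + _)^T]linearD /= !trmx_delta mulmxDl -!rowE [B *m _]mulmxDr -!colE.
  rewrite !mul_col_row_entry !mxE /= !eqxx (negbTE ij) eq_sym (negbTE ij) /=.
  lra.
apply/matrixP => i j; rewrite mxE; have [<-|ij] := eqVneq i j.
  by rewrite mulr1n; have [->//|i0] := eqVneq i 0; exact: diag.
by rewrite mulr0n offdiag // eq_sym.
Qed.

Lemma scalar_congr_fixed_eq0 (n : nat) (c : R) (A : 'M[R]_n) :
  c * c != 1 -> c%:M *m A *m c%:M = A -> A = 0.
Proof.
rewrite mul_scalar_mx mul_mx_scalar scalerA -subr_eq0 => cc1 fixA.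
have /eqP : (c * c - 1) *: A = 0 by rewrite scalerBl fixA scale1r subrr.
by rewrite scaler_eq0 (negbTE cc1) => /eqP.
Qed.

Lemma diag_invariant_skew (n : nat) (K : 'M[R]_(n.+1 + n.+1)) :
  K^T = - K ->
  (forall X, sym_posdef X ->
     block_mx X 0 0 (invmx X) *m K *m block_mx X 0 0 (invmx X) = K) ->
  exists b : R, K = b *: Jmx R n.+1.
Proof.
move=> skewK invK; rewrite -[K]submxK in skewK invK *.
set A := ulsubmx K in skewK invK *; set B := ursubmx K in skewK invK *.
set C := dlsubmx K in skewK invK *; set D := drsubmx K in skewK invK *.
have blocks X : sym_posdef X ->
    [/\ X *m A *m X = A, X *m B *m invmx X = B,
        invmx X *m C *m X = C & invmx X *m D *m invmx X = D].
  by move=> /invK; rewrite diag_congr_block => /eq_block_mx.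
have [A_fix _ _ D_fix] := blocks _ (sym_posdef_scalar n.+1 (ltr0Sn R 1)).
have A0 : A = 0 by apply: scalar_congr_fixed_eq0 A_fix; apply/negP => /eqP; lra.
have D0 : D = 0.
  rewrite invmx_scalar in D_fix; apply: scalar_congr_fixed_eq0 D_fix.
  by apply/negP => /eqP; rewrite -invfM => /(congr1 GRing.inv); lra.
have B_scalar : B = (B 0 0)%:M.
  apply: commute_rank1_scalar => u.
  set X := 1%:M + u^T *m u; have X_pd : sym_posdef X := sym_posdef_rank1 u.
  have [_ B_fix _ _] := blocks _ X_pd.
  have : X *m B = B *m X.
    by rewrite -[X *m B](mulmxKV (sym_posdef_unit X_pd)) B_fix.
  by rewrite mulmxDl mul1mx mulmxDr mulmx1 => /addrI.
move: skewK; rewrite tr_block_mx opp_block_mx => /eq_block_mx [_ _ BtC _].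
exists (B 0 0); rewrite /Jmx scale_block_mx !scaler0 scalerN scalemx1 A0 D0.
have -> : C = - (B 0 0)%:M.
  by rewrite -[C]opprK -BtC [in LHS]B_scalar tr_scalar_mx.
by rewrite -B_scalar.
Qed.

End InvariantMatrices.

Theorem lemma1 (R : realFieldType) (n : nat) (M : 'M[R]_(n + n))
  (hM : M \in unitmx)
  (hG : forall X : 'M[R]_n, sym_posdef X ->
          symplectic (M^T *m block_mx X 0 0 (invmx X) *m M)) :
  symplectic M \/ antisymplectic M.
Proof.
case: n M hM hG => [|n] M hM hG; first by left; apply/matrixP => -[].
set J := Jmx R n.+1; set K := M *m J *m M^T.
have congr_K X : sym_posdef X ->
    M^T *m (block_mx X 0 0 (invmx X) *m K *m block_mx X 0 0 (invmx X)) *m M = J.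
  move=> X_pd; move: (hG X X_pd); rewrite /symplectic !trmx_mul trmxK.
  by rewrite tr_block_mx !trmx0 trmx_inv X_pd.1 /K !mulmxA.
have MtKM : M^T *m K *m M = J.
  have := congr_K _ (sym_posdef_scalar n.+1 (@ltr01 R)).
  by rewrite invmx1 -scalar_mx_block mul1mx mulmx1.
have [b Kb] : exists b : R, K = b *: J.
  apply: diag_invariant_skew => [|X X_pd].
    by rewrite /K !trmx_mul trmxK tr_Jmx mulNmx mulmxN mulmxA.
  have hMt : M^T \in unitmx by rewrite unitmx_tr.
  apply: (can_inj (mulmxK hM)); apply: (can_inj (mulKmx hMt)).
  by rewrite mulmxA congr_K // mulmxA MtKM.
have MtJM : M^T *m J *m M = b *: J by apply: conformal_symplectic_tr.
have /eqP : (b * b - 1) *: J = 0.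
  by rewrite scalerBl -scalerA -MtJM scalemxAl scalemxAr -Kb MtKM scale1r subrr.
rewrite scaler_eq0 (negbTE (Jmx_neq0 R n)) orbF.
have -> : b * b - 1 = (b - 1) * (b + 1) by ring.
rewrite mulf_eq0 subr_eq0 addr_eq0 => /orP[] /eqP b_eq.
- by left; rewrite /symplectic -/J MtJM b_eq scale1r.
- by right; rewrite /antisymplectic -/J MtJM b_eq scaleN1r.
Qed.
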